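(* Let $1\le p<\infty$. Let $f:\mathbb R\to\mathbb R$ be Henstock–Kurzweil integrable on every compact interval and suppose (a) the Henstock–Kurzweil integral $\int_{-\infty}^\infty f(t)\,dt$ exists and equals $0$, and (b) the Henstock–Kurzweil integral $\int_{-\infty}^\infty |t|^\alpha f(t)\,dt$ exists for some $\alpha>1/p$. Then $F(x)=\int_{-\infty}^x f(t)\,dt$ belongs to $L^p(\mathbb R)$, and hence $f=F'\in L'^{\,p}$.
   Context: $L'^{\,p}=\{f\in\mathcal S' : f=F' \text{ (distributional derivative) for some } F\in L^p(\mathbb R)\}$. *)

From Stdlib Require Import Reals Lra List.
Open Scope R_scope.

Fixpoint tagged_div (a b : R) (P : list (R * R * R)) : Prop :=
  match P with
  | nil => a = b
  | (u, v, t) :: P' => u = a /\ u < v /\ u <= t <= v /\ tagged_div v b P'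
  end.

Definition delta_fine (delta : R -> R) (P : list (R * R * R)) : Prop :=
  Forall (fun x => match x with (u, v, t) =>
            t - delta t < u /\ v < t + delta t end) P.

Fixpoint riemann_sum (f : R -> R) (P : list (R * R * R)) : R :=
  match P with
  | nil => 0
  | (u, v, t) :: P' => f t * (v - u) + riemann_sum f P'
  end.

Definition HK_int (f : R -> R) (a b I : R) : Prop :=
  (a = b /\ I = 0) \/
  (a < b /\
   forall eps : R, 0 < eps ->
     exists delta : R -> R, (forall x, 0 < delta x) /\
       forall P, tagged_div a b P -> delta_fine delta P ->
         Rabs (riemann_sum f P - I) < eps).

Definition HK_loc (f : R -> R) : Prop :=
  forall a b, a <= b -> exists I, HK_int f a b I.

(* HK integral over the whole line (via Hake's theorem: limit of the
   integrals over [a,b] as a -> -oo, b -> +oo). *)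
Definition HK_int_R (f : R -> R) (I : R) : Prop :=
  HK_loc f /\
  forall eps : R, 0 < eps -> exists M : R,
    forall a b J, a < - M -> M < b -> HK_int f a b J -> Rabs (J - I) < eps.

Definition HK_int_left (f : R -> R) (x I : R) : Prop :=
  HK_loc f /\
  forall eps : R, 0 < eps -> exists M : R,
    forall a J, a < - M -> a <= x -> HK_int f a x J -> Rabs (J - I) < eps.

(* |t|^alpha for alpha > 0, with the convention 0^alpha = 0
   (Stdlib's Rpower 0 alpha is 1). *)
Definition abspow (t alpha : R) : R :=
  if Req_EM_T t 0 then 0 else Rpower (Rabs t) alpha.

(* F in L^p(R): |F|^p has finite integral over R.  For nonnegative
   functions HK integrability coincides with Lebesgue integrability
   (and implies measurability). *)
Definition in_Lp (p : R) (F : R -> R) : Prop :=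
  exists I : R, HK_int_R (fun x => abspow (F x) p) I.

(* Since the integral of f over R vanishes, F(x) = ∫_{-∞}^x f = - ∫_x^∞ f.  On a
   tail, f = |t|^{-α} · (|t|^α f) with |t|^{-α} monotone, and summation by parts
   on Riemann sums (a second mean value theorem, made rigorous by the
   Saks–Henstock lemma) bounds the tail integrals of f by a constant times
   |x|^{-α}, the partial integrals of |t|^α f being bounded.  Hence
   |F(x)|^p = O(|x|^{-αp}) with αp > 1.  As an indefinite HK integral F is
   continuous, so |F|^p has a nondecreasing primitive H; comparing with
   C |t|^{-αp} shows that H(b) - H(-b) stays bounded, and its supremum is the
   integral of |F|^p over R. *)
From Stdlib Require Import Reals Lra Lia List ClassicalEpsilon.
From Coquelicot Require Import Coquelicot.
Open Scope R_scope.

Lemma Rle_of_le_plus_eps x y K :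
  0 <= K -> (forall e, 0 < e -> x <= y + K * e) -> x <= y.
Proof.
  intros HK H. destruct (Rle_dec x y) as [|Hn]; auto.
  set (e := (x - y) / (2 * (K + 1))).
  assert (He : 0 < e) by (unfold e; apply Rdiv_lt_0_compat; lra).
  specialize (H e He).
  assert (K * e <= (K + 1) * e) by nra.
  assert ((K + 1) * e = (x - y) / 2) by (unfold e; field; lra).
  lra.
Qed.

Lemma Req_of_Rabs_le_eps x y K :
  0 <= K -> (forall e, 0 < e -> Rabs (x - y) <= K * e) -> x = y.
Proof.
  intros HK H.
  assert (Habs : Rabs (x - y) <= 0)
    by (apply (Rle_of_le_plus_eps _ _ K HK); intros e He; specialize (H e He); lra).
  revert Habs. unfold Rabs; destruct Rcase_abs; lra.
Qed.

(** * Tagged divisions *)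

Lemma tagged_div_le a b P : tagged_div a b P -> a <= b.
Proof.
  revert a; induction P as [|[[u v] t] P IH]; simpl; intros a H.
  - lra.
  - destruct H as (-> & Huv & Ht & H). apply IH in H. lra.
Qed.

Lemma tagged_div_refl a P : tagged_div a a P -> P = nil.
Proof.
  destruct P as [|[[u v] t] P]; simpl; auto. intros (-> & Huv & _ & H).
  apply tagged_div_le in H. lra.
Qed.

Lemma tagged_div_app a b c P Q :
  tagged_div a b P -> tagged_div b c Q -> tagged_div a c (P ++ Q).
Proof.
  revert a; induction P as [|[[u v] t] P IH]; simpl; intros a H HQ.
  - subst; auto.
  - destruct H as (-> & Huv & Ht & H). repeat split; auto; lra.
Qed.

Lemma riemann_sum_app f P Q :
  riemann_sum f (P ++ Q) = riemann_sum f P + riemann_sum f Q.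
Proof. induction P as [|[[u v] t] P IH]; simpl; [lra|]. rewrite IH; lra. Qed.

Lemma riemann_sum_ext_in f g a b P : (forall t, a <= t <= b -> f t = g t) ->
  tagged_div a b P -> riemann_sum f P = riemann_sum g P.
Proof.
  revert a; induction P as [|[[u v] t] P IH]; simpl; intros a Hfg H; auto.
  destruct H as (-> & Huv & Ht & H). pose proof (tagged_div_le _ _ _ H).
  rewrite (IH v); auto.
  - rewrite Hfg; auto; lra.
  - intros; apply Hfg; lra.
Qed.

Lemma riemann_sum_le f g a b P : (forall t, a <= t <= b -> f t <= g t) ->
  tagged_div a b P -> riemann_sum f P <= riemann_sum g P.
Proof.
  revert a; induction P as [|[[u v] t] P IH]; simpl; intros a Hfg H; [lra|].
  destruct H as (-> & Huv & Ht & H). pose proof (tagged_div_le _ _ _ H).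
  assert (riemann_sum f P <= riemann_sum g P)
    by (apply (IH v); auto; intros; apply Hfg; lra).
  assert (f t <= g t) by (apply Hfg; lra). nra.
Qed.

Lemma delta_fine_cons d u v t P : delta_fine d ((u, v, t) :: P) <->
  (t - d t < u /\ v < t + d t) /\ delta_fine d P.
Proof. unfold delta_fine. split; intro H; [inversion H; auto | constructor; tauto]. Qed.

Lemma delta_fine_app d P Q :
  delta_fine d P -> delta_fine d Q -> delta_fine d (P ++ Q).
Proof. intros; apply Forall_app; auto. Qed.

Lemma delta_fine_mono d d' P :
  (forall x, d x <= d' x) -> delta_fine d P -> delta_fine d' P.
Proof.
  intros Hd. apply Forall_impl. intros [[u v] t] [H1 H2]. specialize (Hd t). lra.
Qed.

Lemma delta_fine_Rmin_l d1 d2 P :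
  delta_fine (fun x => Rmin (d1 x) (d2 x)) P -> delta_fine d1 P.
Proof. apply delta_fine_mono. intros; apply Rmin_l. Qed.

Lemma delta_fine_Rmin_r d1 d2 P :
  delta_fine (fun x => Rmin (d1 x) (d2 x)) P -> delta_fine d2 P.
Proof. apply delta_fine_mono. intros; apply Rmin_r. Qed.

Lemma gauge_Rmin (d1 d2 : R -> R) :
  (forall x, 0 < d1 x) -> (forall x, 0 < d2 x) -> forall x, 0 < Rmin (d1 x) (d2 x).
Proof. intros; apply Rmin_glb_lt; auto. Qed.

(* Cousin's lemma: the supremum of the points reachable by a fine division
   is reached, and is b. *)
Lemma cousin d a b : (forall x, 0 < d x) -> a <= b ->
  exists P, tagged_div a b P /\ delta_fine d P.
Proof.
  intros Hd Hab.
  set (E := fun x => a <= x <= b /\ exists P, tagged_div a x P /\ delta_fine d P).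
  assert (Ea : E a) by (split; [lra | exists nil; simpl; split; auto; constructor]).
  assert (HB : bound E) by (exists b; intros x [Hx _]; lra).
  destruct (completeness E HB (ex_intro _ a Ea)) as [s [Hub Hlub]].
  assert (Has : a <= s) by (apply Hub, Ea).
  assert (Hsb : s <= b) by (apply Hlub; intros x [Hx _]; lra).
  assert (Hstep : forall x y P, tagged_div a x P -> delta_fine d P -> x < y ->
            x <= s <= y -> s - d s < x -> y < s + d s ->
            tagged_div a y (P ++ (x, y, s) :: nil) /\ delta_fine d (P ++ (x, y, s) :: nil)).
  { intros x y P HP HPf Hxy Hs Hx Hy. split.
    - apply tagged_div_app with x; auto. simpl. repeat split; lra.
    - apply delta_fine_app; auto. repeat constructor; lra. }
  assert (Hs : E s).
  { assert (Hex : exists x, E x /\ s - d s < x).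
    { apply Classical_Prop.NNPP; intro Hn.
      assert (s <= s - d s); [|specialize (Hd s); lra].
      apply Hlub. intros x Hx. destruct (Rle_dec x (s - d s)) as [|Hc]; auto.
      exfalso; apply Hn; exists x; split; auto; lra. }
    destruct Hex as [x [[Hx [P [HP HPf]]] Hxs]].
    assert (x <= s) by (apply Hub; split; [lra | eauto]).
    destruct (Req_dec x s) as [->|Hne].
    - split; [lra | eauto].
    - split; [lra|]. exists (P ++ (x, s, s) :: nil).
      apply Hstep; auto; specialize (Hd s); lra. }
  destruct (Req_dec s b) as [<-|Hne]; [apply Hs|].
  exfalso. destruct Hs as [_ [P [HP HPf]]].
  set (y := Rmin b (s + d s / 2)).
  assert (Hy1 : s < y) by (unfold y; specialize (Hd s); apply Rmin_glb_lt; lra).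
  assert (Hy2 : y <= b) by apply Rmin_l.
  assert (Hy3 : y <= s + d s / 2) by apply Rmin_r.
  assert (y <= s); [|lra].
  apply Hub. split; [lra|]. exists (P ++ (s, y, s) :: nil).
  apply Hstep; auto; specialize (Hd s); lra.
Qed.

(** * The gauge integral on a compact interval *)

Definition gauge_approx f a b I (d : R -> R) eps :=
  (forall x, 0 < d x) /\ forall P, tagged_div a b P -> delta_fine d P ->
    Rabs (riemann_sum f P - I) < eps.

Lemma HK_int_ordered f a b I : HK_int f a b I -> a <= b.
Proof. intros [[]|[]]; lra. Qed.

Lemma HK_int_gauge f a b I : HK_int f a b I ->
  forall eps, 0 < eps -> exists d, gauge_approx f a b I d eps.
Proof.
  intros [[-> ->]|[Hab H]] eps Heps.
  - exists (fun _ => 1). split; [intros; lra|]. intros P HP _.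
    rewrite (tagged_div_refl _ _ HP). simpl. rewrite Rminus_0_r, Rabs_R0. lra.
  - destruct (H eps Heps) as [d [Hd H']]. exists d; split; auto.
Qed.

Lemma HK_int_of_gauge f a b I : a <= b ->
  (forall eps, 0 < eps -> exists d, gauge_approx f a b I d eps) -> HK_int f a b I.
Proof.
  intros Hab H. destruct (Rle_lt_or_eq_dec _ _ Hab) as [Hlt| <-].
  - right. split; [exact Hlt|]. intros eps Heps.
    destruct (H eps Heps) as [d [Hd Hp]]. exists d; split; auto.
  - left. split; auto. apply (Req_of_Rabs_le_eps _ _ 1); [lra|]. intros e He.
    destruct (H e He) as [d [Hd H']]. specialize (H' nil eq_refl (Forall_nil _)).
    simpl in H'. rewrite Rminus_0_l, Rabs_Ropp in H'. rewrite Rminus_0_r. lra.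
Qed.

Lemma HK_int_mono h k a b I J : HK_int h a b I -> HK_int k a b J ->
  (forall t, a <= t <= b -> h t <= k t) -> I <= J.
Proof.
  intros HI HJ Hhk. pose proof (HK_int_ordered _ _ _ _ HI) as Hab.
  apply (Rle_of_le_plus_eps _ _ 2); [lra|]. intros e He.
  destruct (HK_int_gauge _ _ _ _ HI e He) as [d1 [Hd1 H1]].
  destruct (HK_int_gauge _ _ _ _ HJ e He) as [d2 [Hd2 H2]].
  destruct (cousin _ a b (gauge_Rmin _ _ Hd1 Hd2) Hab) as [P [HP HPf]].
  specialize (H1 P HP (delta_fine_Rmin_l _ _ _ HPf)).
  specialize (H2 P HP (delta_fine_Rmin_r _ _ _ HPf)).
  pose proof (riemann_sum_le h k a b P Hhk HP).
  revert H1 H2. unfold Rabs; repeat destruct Rcase_abs; lra.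
Qed.

Lemma HK_int_unique f a b I J : HK_int f a b I -> HK_int f a b J -> I = J.
Proof.
  intros HI HJ.
  apply Rle_antisym; [apply (HK_int_mono f f a b I J) | apply (HK_int_mono f f a b J I)];
    auto using Rle_refl.
Qed.

Lemma HK_int_add f a b c I J K :
  HK_int f a b I -> HK_int f b c J -> HK_int f a c K -> K = I + J.
Proof.
  intros HI HJ HK. pose proof (HK_int_ordered _ _ _ _ HI) as Hab.
  pose proof (HK_int_ordered _ _ _ _ HJ) as Hbc.
  apply (Req_of_Rabs_le_eps _ _ 3); [lra|]. intros e He.
  destruct (HK_int_gauge _ _ _ _ HI e He) as [d1 [Hd1 H1]].
  destruct (HK_int_gauge _ _ _ _ HJ e He) as [d2 [Hd2 H2]].
  destruct (HK_int_gauge _ _ _ _ HK e He) as [d3 [Hd3 H3]].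
  set (d := fun x => Rmin (d3 x) (Rmin (d1 x) (d2 x))).
  assert (Hd : forall x, 0 < d x) by (repeat apply gauge_Rmin; auto).
  destruct (cousin d a b Hd Hab) as [P [HP HPf]].
  destruct (cousin d b c Hd Hbc) as [Q [HQ HQf]].
  specialize (H3 _ (tagged_div_app _ _ _ _ _ HP HQ)
                 (delta_fine_Rmin_l _ _ _ (delta_fine_app _ _ _ HPf HQf))).
  specialize (H1 _ HP (delta_fine_Rmin_l _ _ _ (delta_fine_Rmin_r _ _ _ HPf))).
  specialize (H2 _ HQ (delta_fine_Rmin_r _ _ _ (delta_fine_Rmin_r _ _ _ HQf))).
  rewrite riemann_sum_app in H3.
  revert H1 H2 H3. unfold Rabs; repeat destruct Rcase_abs; lra.
Qed.

(* Junk value when b < a or f is not integrable on [a,b]. *)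
Definition hk_integral f a b := epsilon (inhabits 0) (fun I => HK_int f a b I).

Section DefiniteIntegral.
Variable f : R -> R.
Hypothesis hloc : HK_loc f.

Lemma hk_integral_spec a b : a <= b -> HK_int f a b (hk_integral f a b).
Proof. intros Hab. unfold hk_integral. apply epsilon_spec, hloc, Hab. Qed.

Lemma hk_integral_eq a b I : HK_int f a b I -> hk_integral f a b = I.
Proof.
  intros H. apply (HK_int_unique f a b); auto.
  apply hk_integral_spec, (HK_int_ordered _ _ _ _ H).
Qed.

Lemma hk_integral_refl a : hk_integral f a a = 0.
Proof. apply hk_integral_eq. left; auto. Qed.

Lemma hk_integral_add a b c : a <= b -> b <= c ->
  hk_integral f a c = hk_integral f a b + hk_integral f b c.
Proof.
  intros Hab Hbc. apply (HK_int_add f a b c); apply hk_integral_spec; lra.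
Qed.

Lemma saks_henstock c d u v dl eps : c <= u -> u <= v -> v <= d ->
  gauge_approx f c d (hk_integral f c d) dl eps ->
  forall P, tagged_div u v P -> delta_fine dl P ->
    Rabs (riemann_sum f P - hk_integral f u v) <= eps.
Proof.
  intros Hcu Huv Hvd [Hdl Hg] P HP HPf.
  apply (Rle_of_le_plus_eps _ _ 2); [lra|]. intros e He.
  destruct (HK_int_gauge _ _ _ _ (hk_integral_spec c u Hcu) e He) as [d1 [Hd1 H1]].
  destruct (HK_int_gauge _ _ _ _ (hk_integral_spec v d Hvd) e He) as [d2 [Hd2 H2]].
  destruct (cousin _ c u (gauge_Rmin _ _ Hdl Hd1) Hcu) as [P1 [HP1 HP1f]].
  destruct (cousin _ v d (gauge_Rmin _ _ Hdl Hd2) Hvd) as [P2 [HP2 HP2f]].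
  specialize (H1 _ HP1 (delta_fine_Rmin_r _ _ _ HP1f)).
  specialize (H2 _ HP2 (delta_fine_Rmin_r _ _ _ HP2f)).
  specialize (Hg (P1 ++ P ++ P2)).
  rewrite !riemann_sum_app in Hg.
  specialize (Hg (tagged_div_app _ _ _ _ _ HP1 (tagged_div_app _ _ _ _ _ HP HP2))
                 (delta_fine_app _ _ _ (delta_fine_Rmin_l _ _ _ HP1f)
                    (delta_fine_app _ _ _ HPf (delta_fine_Rmin_l _ _ _ HP2f)))).
  rewrite (hk_integral_add c u d), (hk_integral_add u v d) in Hg by lra.
  revert H1 H2 Hg. unfold Rabs; repeat destruct Rcase_abs; lra.
Qed.

End DefiniteIntegral.

(** * A second mean value theorem *)

(* Abel summation by parts over the tags of a division. *)
Lemma riemann_sum_mul_abel (phi w g : R -> R) c d dl B : 0 <= B ->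
  (forall s t, c <= s -> s <= t -> t <= d -> Rabs (phi t - phi s) <= w t - w s) ->
  (forall s Q, c <= s -> tagged_div s d Q -> delta_fine dl Q -> Rabs (riemann_sum g Q) <= B) ->
  forall P u v t, c <= u -> tagged_div u d ((u, v, t) :: P) -> delta_fine dl ((u, v, t) :: P) ->
  Rabs (riemann_sum (fun x => phi x * g x) ((u, v, t) :: P)
        - phi t * riemann_sum g ((u, v, t) :: P)) <= B * (w d - w t).
Proof.
  intros HB Hw Hg P. induction P as [|[[u2 v2] t2] P IH]; intros u v t Hcu HP HPf.
  - simpl in HP. destruct HP as (_ & Huv & Ht & ->). simpl.
    replace (phi t * g t * (d - u) + 0 - phi t * (g t * (d - u) + 0)) with 0 by ring.
    rewrite Rabs_R0. specialize (Hw t d ltac:(lra) ltac:(lra) ltac:(lra)).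
    pose proof (Rabs_pos (phi d - phi t)). nra.
  - assert (HP' := HP). simpl in HP'.
    destruct HP' as (_ & Huv & Ht & -> & Huv2 & Ht2 & HP'').
    apply delta_fine_cons in HPf. destruct HPf as [_ HPf'].
    pose proof (tagged_div_le _ _ _ HP'').
    assert (IH' := IH v v2 t2 ltac:(lra) ltac:(simpl; auto) HPf').
    assert (Hb := Hg v ((v, v2, t2) :: P) ltac:(lra) ltac:(simpl; auto) HPf').
    assert (Hw' := Hw t t2 ltac:(lra) ltac:(lra) ltac:(lra)).
    set (S := riemann_sum g ((v, v2, t2) :: P)) in *.
    set (T := riemann_sum (fun x => phi x * g x) ((v, v2, t2) :: P)) in *.
    change (Rabs (phi t * g t * (v - u) + T - phi t * (g t * (v - u) + S))
            <= B * (w d - w t)).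
    replace (phi t * g t * (v - u) + T - phi t * (g t * (v - u) + S))
      with ((T - phi t2 * S) + (phi t2 - phi t) * S) by ring.
    eapply Rle_trans; [apply Rabs_triang|]. rewrite Rabs_mult.
    assert (Rabs (phi t2 - phi t) * Rabs S <= (w t2 - w t) * B)
      by (apply Rmult_le_compat; auto using Rabs_pos).
    nra.
Qed.

Lemma riemann_sum_tail_le g c d dl e M : HK_loc g ->
  gauge_approx g c d (hk_integral g c d) dl e ->
  (forall s, c <= s <= d -> Rabs (hk_integral g s d) <= M) ->
  forall s Q, c <= s -> tagged_div s d Q -> delta_fine dl Q ->
    Rabs (riemann_sum g Q) <= M + e.
Proof.
  intros Hg Hdl HM s Q Hs HQ HQf. pose proof (tagged_div_le _ _ _ HQ).
  assert (HS := saks_henstock g Hg c d s d dl e Hs ltac:(lra) ltac:(lra) Hdl Q HQ HQf).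
  assert (HMs := HM s ltac:(lra)).
  revert HS HMs. unfold Rabs; repeat destruct Rcase_abs; lra.
Qed.

Lemma hk_integral_mul_bv_le f g phi w c d Phi0 M : HK_loc f -> HK_loc g -> c < d ->
  (forall t, c <= t <= d -> f t = phi t * g t) ->
  (forall s t, c <= s -> s <= t -> t <= d -> Rabs (phi t - phi s) <= w t - w s) ->
  (forall t, c <= t <= d -> 0 <= phi t <= Phi0) ->
  (forall t, c <= t <= d -> w d - w t <= Phi0) ->
  (forall s, c <= s <= d -> Rabs (hk_integral g s d) <= M) ->
  Rabs (hk_integral f c d) <= 2 * Phi0 * M.
Proof.
  intros Hf Hg Hcd Hfg Hw Hphi HwP HM.
  assert (HP0 : 0 <= Phi0) by (destruct (Hphi c); lra).
  assert (HM0 : 0 <= M) by (eapply Rle_trans; [apply Rabs_pos | apply (HM c); lra]).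
  apply (Rle_of_le_plus_eps _ _ (1 + 2 * Phi0)); [lra|]. intros e He.
  destruct (HK_int_gauge _ _ _ _ (hk_integral_spec f Hf c d ltac:(lra)) e He) as [d1 [Hd1 H1]].
  destruct (HK_int_gauge _ _ _ _ (hk_integral_spec g Hg c d ltac:(lra)) e He) as [d2 [Hd2 H2]].
  set (dl := fun x => Rmin (d1 x) (d2 x)).
  destruct (cousin dl c d (gauge_Rmin _ _ Hd1 Hd2) ltac:(lra)) as [P [HP HPf]].
  assert (H1P := H1 P HP (delta_fine_Rmin_l _ _ _ HPf)).
  assert (Htail : forall s Q, c <= s -> tagged_div s d Q -> delta_fine dl Q ->
            Rabs (riemann_sum g Q) <= M + e).
  { intros s Q Hs HQ HQf.
    apply (riemann_sum_tail_le g c d d2 e M Hg (conj Hd2 H2) HM s Q Hs HQ).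
    exact (delta_fine_Rmin_r _ _ _ HQf). }
  destruct P as [|[[u v] t] P]; [simpl in HP; lra|].
  assert (HA := riemann_sum_mul_abel phi w g c d dl (M + e) ltac:(lra) Hw Htail P u v t).
  assert (HP' := HP). simpl in HP'. destruct HP' as (-> & Huv & Ht & HP'').
  pose proof (tagged_div_le _ _ _ HP'').
  specialize (HA ltac:(lra) HP HPf).
  rewrite (riemann_sum_ext_in f (fun x => phi x * g x) c d) in H1P; auto.
  assert (Hg1 := Htail c _ ltac:(lra) HP HPf).
  assert (Hpt := Hphi t ltac:(lra)). assert (Hwt := HwP t ltac:(lra)).
  set (S := riemann_sum g ((c, v, t) :: P)) in *.
  set (T := riemann_sum (fun x => phi x * g x) ((c, v, t) :: P)) in *.
  assert (Rabs (phi t * S) <= Phi0 * (M + e)).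
  { rewrite Rabs_mult, (Rabs_right (phi t)) by lra.
    pose proof (Rabs_pos S). apply Rmult_le_compat; lra. }
  assert ((M + e) * (w d - w t) <= (M + e) * Phi0) by (apply Rmult_le_compat_l; lra).
  replace (hk_integral f c d) with ((hk_integral f c d - T) + (T - phi t * S) + phi t * S)
    by ring.
  rewrite Rabs_minus_sym in H1P.
  pose proof (Rabs_triang (hk_integral f c d - T + (T - phi t * S)) (phi t * S)).
  pose proof (Rabs_triang (hk_integral f c d - T) (T - phi t * S)).
  nra.
Qed.

(** * Integrals over half-lines and over the line *)

Lemma exists_below M x : exists a, a < - M /\ a <= x.
Proof.
  exists (- Rabs M - Rabs x - 1).
  pose proof (Rle_abs M). pose proof (Rle_abs (- x)). rewrite Rabs_Ropp in *.
  pose proof (Rabs_pos x). pose proof (Rabs_pos M). split; lra.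
Qed.

Lemma exists_above M x : exists b, M < b /\ x <= b.
Proof.
  destruct (exists_below M (- x)) as [a [Ha Hax]]. exists (- a). split; lra.
Qed.

Lemma HK_int_R_cauchy g I : HK_int_R g I -> forall eps, 0 < eps -> exists M,
  (forall s t, M < s -> s <= t -> Rabs (hk_integral g s t) < 2 * eps) /\
  (forall s t, s <= t -> t < - M -> Rabs (hk_integral g s t) < 2 * eps).
Proof.
  intros [Hg H] eps Heps. destruct (H eps Heps) as [M HM]. exists M. split.
  - intros s t Hs Hst. destruct (exists_below M s) as [a [Ha Has]].
    assert (H1 := HM a t _ Ha ltac:(lra) (hk_integral_spec g Hg a t ltac:(lra))).
    assert (H2 := HM a s _ Ha ltac:(lra) (hk_integral_spec g Hg a s Has)).
    rewrite (hk_integral_add g Hg a s t Has Hst) in H1.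
    revert H1 H2. unfold Rabs at 1 2 3; repeat destruct Rcase_abs; lra.
  - intros s t Hst Ht. destruct (exists_above M t) as [b [Hb Htb]].
    assert (H1 := HM s b _ ltac:(lra) Hb (hk_integral_spec g Hg s b ltac:(lra))).
    assert (H2 := HM t b _ ltac:(lra) Hb (hk_integral_spec g Hg t b Htb)).
    rewrite (hk_integral_add g Hg s t b Hst Htb) in H1.
    revert H1 H2. unfold Rabs at 1 2 3; repeat destruct Rcase_abs; lra.
Qed.

Lemma hk_integral_lower_limits_close f x B e a1 a2 : HK_loc f ->
  (forall s t, s <= t -> t < B -> Rabs (hk_integral f s t) < e) ->
  a1 < B -> a2 < B -> a1 <= x -> a2 <= x ->
  Rabs (hk_integral f a1 x - hk_integral f a2 x) < e.
Proof.
  intros Hf H H1 H2 H3 H4. destruct (Rle_dec a1 a2) as [Hle|Hlt].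
  - rewrite (hk_integral_add f Hf a1 a2 x Hle H4).
    replace (_ + _ - _) with (hk_integral f a1 a2) by ring. apply H; lra.
  - rewrite (hk_integral_add f Hf a2 a1 x ltac:(lra) H3).
    replace (_ - (_ + _)) with (- hk_integral f a2 a1) by ring.
    rewrite Rabs_Ropp. apply H; lra.
Qed.

Lemma continuity_pt_of_eps_delta h x :
  (forall e, 0 < e -> exists eta, 0 < eta /\
     forall y, Rabs (y - x) < eta -> Rabs (h y - h x) < e) ->
  continuity_pt h x.
Proof.
  intros Hc e He. destruct (Hc e He) as [eta [Heta H]]. exists eta. split; auto.
  intros y [_ Hy]. apply H, Hy.
Qed.

Section Primitive.
Variables (f : R -> R) (I0 : R).
Hypothesis hloc : HK_loc f.
Hypothesis hR : HK_int_R f I0.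

Lemma HK_int_left_exists x : exists I, HK_int_left f x I.
Proof.
  set (u := fun n : nat => hk_integral f (x - INR n) x).
  assert (Hc : Cauchy_crit u).
  { intros e He. destruct (HK_int_R_cauchy f I0 hR (e / 2) ltac:(lra)) as [M [_ HL]].
    destruct (INR_unbounded (x + Rabs M)) as [N HN]. exists N. intros n m Hn Hm.
    unfold R_dist, u. apply le_INR in Hn. apply le_INR in Hm. pose proof (Rle_abs M).
    pose proof (pos_INR n). pose proof (pos_INR m).
    replace e with (2 * (e / 2)) by field.
    apply hk_integral_lower_limits_close with (- M); auto; lra. }
  destruct (Rcomplete.R_complete u Hc) as [l Hl]. exists l. split; auto.
  intros e He. destruct (HK_int_R_cauchy f I0 hR (e / 4) ltac:(lra)) as [M [_ HL]].
  exists M. intros a J Ha Hax HJ.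
  rewrite <- (hk_integral_eq f hloc a x J HJ).
  destruct (Hl (e / 2) ltac:(lra)) as [N HN].
  destruct (INR_unbounded (x + Rabs M)) as [n0 Hn0].
  pose proof (Rle_abs M). pose proof (pos_INR N). pose proof (pos_INR n0).
  specialize (HN (N + n0)%nat ltac:(lia)). unfold R_dist, u in HN.
  rewrite plus_INR in HN.
  assert (Hd : Rabs (hk_integral f a x - hk_integral f (x - (INR N + INR n0)) x)
               < 2 * (e / 4))
    by (apply hk_integral_lower_limits_close with (- M); auto; lra).
  revert Hd HN. unfold Rabs at 1 2 3; repeat destruct Rcase_abs; lra.
Qed.

Definition hk_primitive x := epsilon (inhabits 0) (fun I => HK_int_left f x I).

Lemma hk_primitive_spec x : HK_int_left f x (hk_primitive x).
Proof. unfold hk_primitive. apply epsilon_spec, HK_int_left_exists. Qed.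

Lemma hk_primitive_approx x e : 0 < e -> exists M,
  forall a, a < - M -> a <= x -> Rabs (hk_integral f a x - hk_primitive x) < e.
Proof.
  intros He. destruct (hk_primitive_spec x) as [_ H]. destruct (H e He) as [M HM].
  exists M. intros a Ha Hax. apply (HM a); auto. apply hk_integral_spec; auto.
Qed.

Lemma hk_primitive_sub x y : x <= y ->
  hk_primitive y - hk_primitive x = hk_integral f x y.
Proof.
  intros Hxy. apply (Req_of_Rabs_le_eps _ _ 2); [lra|]. intros e He.
  destruct (hk_primitive_approx x e He) as [M1 H1].
  destruct (hk_primitive_approx y e He) as [M2 H2].
  destruct (exists_below (Rmax M1 M2) x) as [a [Ha Hax]].
  pose proof (Rmax_l M1 M2). pose proof (Rmax_r M1 M2).
  specialize (H1 a ltac:(lra) Hax). specialize (H2 a ltac:(lra) ltac:(lra)).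
  rewrite (hk_integral_add f hloc a x y Hax Hxy) in H2.
  revert H1 H2. unfold Rabs; repeat destruct Rcase_abs; lra.
Qed.

(* By Saks–Henstock, the one-interval division tagged at x already
   approximates the integral over [x,y] within the gauge at x. *)
Lemma continuity_pt_hk_primitive x : continuity_pt hk_primitive x.
Proof.
  apply continuity_pt_of_eps_delta. intros e He.
  destruct (HK_int_gauge _ _ _ _ (hk_integral_spec f hloc (x - 1) (x + 1) ltac:(lra))
              (e / 4) ltac:(lra)) as [d [Hd Hg]].
  set (eta := Rmin 1 (Rmin (d x) (e / (2 * (Rabs (f x) + 1))))).
  assert (Hfx := Rabs_pos (f x)).
  assert (He2 : 0 < e / (2 * (Rabs (f x) + 1))) by (apply Rdiv_lt_0_compat; lra).
  assert (Heta : 0 < eta) by (unfold eta; repeat apply Rmin_glb_lt; auto; lra).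
  assert (E1 : eta <= 1) by apply Rmin_l.
  assert (E2 : eta <= d x) by (eapply Rle_trans; [apply Rmin_r | apply Rmin_l]).
  assert (E3 : eta <= e / (2 * (Rabs (f x) + 1)))
    by (eapply Rle_trans; [apply Rmin_r | apply Rmin_r]).
  assert (Hsmall : Rabs (f x) * eta <= e / 2).
  { apply Rle_trans with ((Rabs (f x) + 1) * (e / (2 * (Rabs (f x) + 1)))).
    - apply Rmult_le_compat; lra.
    - right. field. lra. }
  assert (Hstep : forall u v, x - 1 <= u -> u < v -> v <= x + 1 -> u = x \/ v = x ->
            v - u < eta -> Rabs (hk_integral f u v) < e).
  { intros u v Hu Huv Hv Hx Hlen.
    assert (HS := saks_henstock f hloc (x - 1) (x + 1) u v d (e / 4)
                   ltac:(lra) ltac:(lra) ltac:(lra) ltac:(split; auto)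
                   ((u, v, x) :: nil) ltac:(simpl; repeat split; lra)
                   ltac:(repeat constructor; lra)).
    simpl in HS.
    assert (Rabs (f x * (v - u)) <= e / 2)
      by (rewrite Rabs_mult, (Rabs_right (v - u)) by lra; nra).
    revert HS H. unfold Rabs; repeat destruct Rcase_abs; lra. }
  exists eta. split; auto. intros y Hy.
  destruct (Rtotal_order x y) as [Hlt|[<-|Hgt]].
  - rewrite Rabs_right in Hy by lra. rewrite hk_primitive_sub by lra.
    apply Hstep; lra.
  - unfold Rminus; rewrite Rplus_opp_r, Rabs_R0; lra.
  - rewrite Rabs_left in Hy by lra. rewrite Rabs_minus_sym, hk_primitive_sub by lra.
    apply Hstep; lra.
Qed.

End Primitive.

(** * Decay of the primitive *)

Lemma Rpower_pos x y : 0 < Rpower x y.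
Proof. apply exp_pos. Qed.

Lemma Rpower_Ropp_le_contravar a s t : 0 <= a -> 0 < s <= t ->
  Rpower t (- a) <= Rpower s (- a).
Proof.
  intros Ha Hst. rewrite !Rpower_Ropp. apply Rinv_le_contravar; [apply Rpower_pos|].
  apply Rle_Rpower_l; auto.
Qed.

Lemma Rpower_Ropp_mul t a : 0 < t -> Rpower t (- a) * Rpower t a = 1.
Proof.
  intros Ht. rewrite <- Rpower_plus. replace (- a + a) with 0 by ring. apply Rpower_O, Ht.
Qed.

Lemma abspow_pos t a : 0 < t -> abspow t a = Rpower t a.
Proof. intros Ht. unfold abspow. destruct Req_EM_T; [lra|]. rewrite Rabs_right; lra. Qed.

Lemma abspow_neg t a : t < 0 -> abspow t a = Rpower (- t) a.
Proof. intros Ht. unfold abspow. destruct Req_EM_T; [lra|]. rewrite Rabs_left; lra. Qed.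

Section Decay.
Variables (f : R -> R) (alpha Ig : R).
Hypothesis hloc : HK_loc f.
Hypothesis halpha : 0 < alpha.
Hypothesis hg : HK_int_R (fun t => abspow t alpha * f t) Ig.

(* f = |t|^{-α} (|t|^α f) on a tail, where the partial integrals of
   |t|^α f are bounded by 2. *)
Lemma hk_integral_tail_decay : exists N, 1 <= N /\
  (forall x b, N <= x -> x <= b -> Rabs (hk_integral f x b) <= 4 * Rpower x (- alpha)) /\
  (forall a x, x <= - N -> a <= x -> Rabs (hk_integral f a x) <= 4 * Rpower (- x) (- alpha)).
Proof.
  set (g := fun t => abspow t alpha * f t).
  assert (Hgl : HK_loc g) by apply hg.
  destruct (HK_int_R_cauchy g Ig hg 1 ltac:(lra)) as [M1 [HR HL]].
  exists (Rmax 1 (M1 + 1)). split; [apply Rmax_l|].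
  pose proof (Rmax_l 1 (M1 + 1)). pose proof (Rmax_r 1 (M1 + 1)).
  set (N := Rmax 1 (M1 + 1)) in *.
  split.
  - intros x b Hx Hxb. destruct (Req_dec x b) as [<-|Hne].
    { rewrite hk_integral_refl, Rabs_R0; auto. pose proof (Rpower_pos x (- alpha)); lra. }
    replace (4 * Rpower x (- alpha)) with (2 * Rpower x (- alpha) * 2) by ring.
    apply hk_integral_mul_bv_le with g (fun t => Rpower t (- alpha))
      (fun t => - Rpower t (- alpha)); auto; try lra.
    + intros t Ht. unfold g. rewrite abspow_pos by lra.
      rewrite <- Rmult_assoc, Rpower_Ropp_mul by lra. ring.
    + intros s t Hs Hst Htb.
      pose proof (Rpower_Ropp_le_contravar alpha s t ltac:(lra) ltac:(lra)).
      rewrite Rabs_left1; lra.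
    + intros t Ht. split; [pose proof (Rpower_pos t (- alpha)); lra|].
      apply Rpower_Ropp_le_contravar; lra.
    + intros t Ht. pose proof (Rpower_Ropp_le_contravar alpha x t ltac:(lra) ltac:(lra)).
      pose proof (Rpower_pos b (- alpha)). lra.
    + intros s Hs. left. rewrite <- (Rmult_1_r 2). apply (HR s b); lra.
  - intros a x Hx Hax. destruct (Req_dec a x) as [<-|Hne].
    { rewrite hk_integral_refl, Rabs_R0; auto. pose proof (Rpower_pos (- a) (- alpha)); lra. }
    replace (4 * Rpower (- x) (- alpha)) with (2 * Rpower (- x) (- alpha) * 2) by ring.
    apply hk_integral_mul_bv_le with g (fun t => Rpower (- t) (- alpha))
      (fun t => Rpower (- t) (- alpha)); auto; try lra.
    + intros t Ht. unfold g. rewrite abspow_neg by lra.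
      rewrite <- Rmult_assoc, Rpower_Ropp_mul by lra. ring.
    + intros s t Hs Hst Htb.
      pose proof (Rpower_Ropp_le_contravar alpha (- t) (- s) ltac:(lra) ltac:(lra)).
      rewrite Rabs_right; lra.
    + intros t Ht. split; [pose proof (Rpower_pos (- t) (- alpha)); lra|].
      apply Rpower_Ropp_le_contravar; lra.
    + intros t Ht. pose proof (Rpower_pos (- t) (- alpha)). lra.
    + intros s Hs. left. rewrite <- (Rmult_1_r 2). apply (HL s x); lra.
Qed.

Hypothesis h0 : HK_int_R f 0.

(* On the right, F(x) = - ∫_x^∞ f because the integral over R vanishes. *)
Lemma hk_primitive_decay : exists N, 1 <= N /\ forall x, N <= Rabs x ->
  Rabs (hk_primitive f x) <= 4 * Rpower (Rabs x) (- alpha).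
Proof.
  destruct hk_integral_tail_decay as [N [HN1 [HR HL]]].
  exists N. split; auto. intros x Hx.
  destruct (Rle_dec 0 x) as [Hx0|Hx0].
  - rewrite Rabs_right in * by lra.
    apply (Rle_of_le_plus_eps _ _ 3); [lra|]. intros e He.
    destruct (hk_primitive_approx f 0 hloc h0 x e He) as [M1 Happrox].
    destruct h0 as [_ Hwhole0]. destruct (Hwhole0 e He) as [M0 HM0].
    destruct (exists_above M0 x) as [b [Hb1 Hb2]].
    destruct (exists_below (Rmax M1 M0) x) as [a [Ha Hax]].
    pose proof (Rmax_l M1 M0) as HM1. pose proof (Rmax_r M1 M0) as HM0'.
    specialize (Happrox a ltac:(lra) Hax).
    assert (Hwhole := HM0 a b _ ltac:(lra) Hb1 (hk_integral_spec f hloc a b ltac:(lra))).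
    rewrite (hk_integral_add f hloc a x b Hax Hb2) in Hwhole.
    assert (Htail := HR x b ltac:(lra) Hb2).
    revert Happrox Hwhole Htail. unfold Rabs; repeat destruct Rcase_abs; lra.
  - rewrite Rabs_left in * by lra.
    apply (Rle_of_le_plus_eps _ _ 1); [lra|]. intros e He.
    destruct (hk_primitive_approx f 0 hloc h0 x e He) as [M1 Happrox].
    destruct (exists_below M1 x) as [a [Ha Hax]].
    specialize (Happrox a Ha Hax).
    assert (Htail := HL a x ltac:(lra) Hax).
    revert Happrox Htail. unfold Rabs; repeat destruct Rcase_abs; lra.
Qed.

End Decay.

(** * Integrals of derivatives *)

Lemma riemann_sum_derivative_error H h a b e (del : R -> R) : 0 <= e ->
  (forall t, a <= t <= b -> forall y, Rabs (y - t) < del t ->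
     Rabs (H y - H t - h t * (y - t)) <= e * Rabs (y - t)) ->
  forall P u, a <= u -> tagged_div u b P -> delta_fine del P ->
    Rabs (riemann_sum h P - (H b - H u)) <= e * (b - u).
Proof.
  intros He Hdel. induction P as [|[[u v] t] P IH]; intros u0 Hu0 HP HPf.
  - simpl in HP. subst. simpl. replace (0 - (H b - H b)) with 0 by ring.
    rewrite Rabs_R0. nra.
  - simpl in HP. destruct HP as (-> & Huv & Ht & HP).
    apply delta_fine_cons in HPf. destruct HPf as [[F1 F2] HPf].
    pose proof (tagged_div_le _ _ _ HP).
    specialize (IH v ltac:(lra) HP HPf).
    assert (A1 := Hdel t ltac:(lra) v ltac:(rewrite Rabs_right; lra)).
    assert (A2 := Hdel t ltac:(lra) u0 ltac:(rewrite Rabs_left1; lra)).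
    rewrite (Rabs_right (v - t)) in A1 by lra. rewrite (Rabs_left1 (u0 - t)) in A2 by lra.
    simpl.
    set (A := H v - H t - h t * (v - t)) in *.
    set (B := H u0 - H t - h t * (u0 - t)) in *.
    replace (h t * (v - u0) + riemann_sum h P - (H b - H u0))
      with (- (A + - B) + (riemann_sum h P - (H b - H v))) by (unfold A, B; ring).
    pose proof (Rabs_triang (- (A + - B)) (riemann_sum h P - (H b - H v))).
    pose proof (Rabs_triang A (- B)). rewrite Rabs_Ropp in *.
    nra.
Qed.

Lemma HK_int_derivative H h a b : a <= b ->
  (forall t, a <= t <= b -> derivable_pt_lim H t (h t)) -> HK_int h a b (H b - H a).
Proof.
  intros Hab HD. apply HK_int_of_gauge; auto. intros eps Heps.
  set (e := eps / (2 * (b - a + 1))).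
  assert (He : 0 < e) by (apply Rdiv_lt_0_compat; lra).
  assert (Hex : forall t, exists eta, 0 < eta /\ (a <= t <= b -> forall y, Rabs (y - t) < eta ->
              Rabs (H y - H t - h t * (y - t)) <= e * Rabs (y - t))).
  { intros t. destruct (Rle_dec a t) as [H1|H1]; [destruct (Rle_dec t b) as [H2|H2]|].
    2,3: exists 1; split; [lra | intros; lra].
    destruct (HD t (conj H1 H2) e He) as [del Hdel]. exists del. split; [apply cond_pos|].
    intros _ y Hy. destruct (Req_dec y t) as [->|Hne].
    - rewrite !Rminus_diag, Rmult_0_r, Rminus_0_r, Rabs_R0, Rmult_0_r. lra.
    - specialize (Hdel (y - t) ltac:(lra) Hy). replace (t + (y - t)) with y in Hdel by ring.
      replace (H y - H t - h t * (y - t)) with ((y - t) * ((H y - H t) / (y - t) - h t))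
        by (field; lra).
      rewrite Rabs_mult, Rmult_comm. apply Rmult_le_compat_r; [apply Rabs_pos | lra]. }
  destruct (choice _ Hex) as [del Hdel].
  exists del. split; [intros; apply Hdel|]. intros P HP HPf.
  pose proof (riemann_sum_derivative_error H h a b e del ltac:(lra)
                ltac:(intros; apply Hdel; auto) P a ltac:(lra) HP HPf).
  assert (e * (b - a) < eps); [|lra].
  apply Rle_lt_trans with (e * (b - a + 1)); [apply Rmult_le_compat_l; lra|].
  replace (e * (b - a + 1)) with (eps / 2) by (unfold e; field; lra). lra.
Qed.

Lemma nondecreasing_of_derivative_nonneg H h :
  (forall x, derivable_pt_lim H x (h x)) -> (forall x, 0 <= h x) ->
  forall a b, a <= b -> H a <= H b.
Proof.
  intros HD Hh a b Hab.
  assert (Hzero : HK_int (fun _ => 0) a b (0 - 0)).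
  { apply (HK_int_derivative (fun _ => 0)); auto. intros; apply derivable_pt_lim_const. }
  assert (0 - 0 <= H b - H a); [|lra].
  apply (HK_int_mono (fun _ => 0) h a b); auto. apply HK_int_derivative; auto.
Qed.

Lemma abspow_nonneg z p : 0 <= abspow z p.
Proof. unfold abspow. destruct Req_EM_T; [lra | left; apply Rpower_pos]. Qed.

Lemma abspow_le_Rabs y p : 1 <= p -> Rabs y <= 1 -> abspow y p <= Rabs y.
Proof.
  intros Hp Hy. unfold abspow. destruct Req_EM_T as [->|Hy0]; [apply Rabs_pos|].
  pose proof (Rabs_pos_lt y Hy0).
  assert (Hln : ln (Rabs y) <= 0) by (rewrite <- ln_1; apply ln_le; lra).
  unfold Rpower. rewrite <- (exp_ln (Rabs y)) at 2 by lra.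
  destruct (Req_dec p 1) as [->|Hp1]; [rewrite Rmult_1_l; lra|].
  destruct Hln as [Hln| ->]; [left; apply exp_increasing; nra | rewrite Rmult_0_r; lra].
Qed.

Lemma continuity_pt_abspow p y0 : 1 <= p -> continuity_pt (fun y => abspow y p) y0.
Proof.
  intros Hp. destruct (Req_dec y0 0) as [->|Hy0].
  - apply continuity_pt_of_eps_delta. intros e He. exists (Rmin 1 e).
    split; [apply Rmin_glb_lt; lra|]. intros y Hy.
    rewrite Rminus_0_r in Hy.
    pose proof (Rmin_l 1 e). pose proof (Rmin_r 1 e).
    pose proof (abspow_le_Rabs y p Hp ltac:(lra)). pose proof (abspow_nonneg y p).
    unfold abspow at 2. destruct Req_EM_T; [|lra].
    rewrite Rminus_0_r, Rabs_right; lra.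
  - apply continuity_pt_locally_ext with (comp (fun z => Rpower z p) Rabs) (Rabs y0).
    + apply Rabs_pos_lt, Hy0.
    + intros y Hy. unfold Rdist in Hy. unfold comp, abspow. destruct Req_EM_T as [->|]; auto.
      rewrite Rminus_0_l, Rabs_Ropp in Hy. lra.
    + apply continuity_pt_comp; [apply Rcontinuity_abs|].
      apply derivable_continuous_pt. exists (p * Rpower (Rabs y0) (p - 1)).
      apply derivable_pt_lim_power, Rabs_pos_lt, Hy0.
Qed.

Lemma continuous_primitive h : (forall x, continuity_pt h x) ->
  exists H, forall x, derivable_pt_lim H x (h x).
Proof.
  intros Hc. exists (fun x => RInt h 0 x). intros x. apply is_derive_Reals.
  apply (is_derive_RInt h (fun x => RInt h 0 x) 0 x).
  - apply filter_forall. intros b. apply (RInt_correct (V := R_CompleteNormedModule)).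
    apply (ex_RInt_continuous (V := R_CompleteNormedModule)).
    intros; apply continuity_pt_filterlim, Hc.
  - apply continuity_pt_filterlim, Hc.
Qed.

(** * Integrability of |F|^p *)

Lemma abspow_decay F p alpha C N : 0 < p -> 0 < C ->
  (forall x, N <= Rabs x -> Rabs (F x) <= C * Rpower (Rabs x) (- alpha)) ->
  forall x, N <= Rabs x -> abspow (F x) p <= Rpower C p * Rpower (Rabs x) (- (alpha * p)).
Proof.
  intros Hp HC HF x Hx. specialize (HF x Hx).
  unfold abspow at 1. destruct Req_EM_T as [E|E].
  - left. apply Rmult_lt_0_compat; apply Rpower_pos.
  - pose proof (Rabs_pos_lt _ E).
    eapply Rle_trans; [apply Rle_Rpower_l; [lra | split; [auto | exact HF]]|].
    rewrite <- Rpower_mult_distr by (try apply Rpower_pos; lra).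
    rewrite Rpower_mult. right. do 2 f_equal. ring.
Qed.

(* Compare H with the primitive C t^{1-q} / (1-q) of C t^{-q}. *)
Lemma primitive_tail_le H h C q N : 0 <= C -> 1 < q -> 0 < N ->
  (forall x, derivable_pt_lim H x (h x)) ->
  (forall t, N <= t -> h t <= C * Rpower t (- q)) ->
  forall b, N <= b -> H b - H N <= C / (q - 1) * Rpower N (1 - q).
Proof.
  intros HC Hq HN HD Hh b Hb.
  set (K := fun x => C / (1 - q) * Rpower x (1 - q)).
  assert (HK : forall t, N <= t <= b -> derivable_pt_lim K t (C * Rpower t (- q))).
  { intros t Ht.
    assert (HdK := derivable_pt_lim_scal _ (C / (1 - q)) t _
                     (derivable_pt_lim_power t (1 - q) ltac:(lra))).
    replace (1 - q - 1) with (- q) in HdK by ring.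
    replace (C * Rpower t (- q)) with (C / (1 - q) * ((1 - q) * Rpower t (- q)))
      by (field; lra).
    exact HdK. }
  assert (H b - H N <= K b - K N).
  { apply (HK_int_mono h (fun t => C * Rpower t (- q)) N b);
      [apply HK_int_derivative; auto | apply HK_int_derivative; auto |].
    intros t Ht. apply Hh. lra. }
  assert (0 <= C / (q - 1)) by (apply Rdiv_le_0_compat; lra).
  pose proof (Rpower_pos b (1 - q)).
  assert (K b - K N = C / (q - 1) * Rpower N (1 - q) - C / (q - 1) * Rpower b (1 - q))
    by (unfold K; field; lra).
  nra.
Qed.

Lemma derivable_pt_lim_reflect H h x : derivable_pt_lim H (- x) (h (- x)) ->
  derivable_pt_lim (fun y => - H (- y)) x (h (- x)).
Proof.
  intros HD. rewrite <- (Ropp_involutive (h (- x))).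
  apply (derivable_pt_lim_opp (mirr_fct H)), derivable_pt_lim_mirr_fwd.
  rewrite Ropp_involutive. exact HD.
Qed.

(* The spread H b - H (-b) is nondecreasing in b; its supremum is the integral. *)
Lemma HK_int_R_of_primitive H h :
  (forall x, derivable_pt_lim H x (h x)) -> (forall x, 0 <= h x) ->
  (exists B, forall b, 0 <= b -> H b - H (- b) <= B) -> exists I, HK_int_R h I.
Proof.
  intros HD Hh [B HB].
  assert (Hmono := nondecreasing_of_derivative_nonneg H h HD Hh).
  set (E := fun y => exists b, 0 <= b /\ y = H b - H (- b)).
  assert (HEb : bound E) by (exists B; intros y [b [Hb ->]]; auto).
  assert (HEn : E (H 0 - H (- 0))) by (exists 0; split; [lra | auto]).
  destruct (completeness E HEb (ex_intro _ _ HEn)) as [I [Hub Hlub]].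
  exists I. split.
  { intros a b Hab. exists (H b - H a). apply HK_int_derivative; auto. }
  intros e He.
  assert (Hex : exists b0, 0 <= b0 /\ I - e < H b0 - H (- b0)).
  { apply Classical_Prop.NNPP; intro Hn.
    assert (I <= I - e); [|lra].
    apply Hlub. intros y [b [Hb ->]].
    destruct (Rle_dec (H b - H (- b)) (I - e)) as [|Hc]; auto.
    exfalso; apply Hn; exists b; split; auto; lra. }
  destruct Hex as [b0 [Hb0 Hb0e]]. exists b0. intros a b J Ha Hb HJ.
  rewrite (HK_int_unique h a b J (H b - H a) HJ) by (apply HK_int_derivative; auto; lra).
  pose proof (Rmin_l (- a) b). pose proof (Rmin_r (- a) b).
  pose proof (Rmax_l (- a) b). pose proof (Rmax_r (- a) b).
  set (m := Rmin (- a) b) in *. set (m' := Rmax (- a) b) in *.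
  assert (b0 < m) by (apply Rmin_glb_lt; lra).
  assert (H b0 <= H m) by (apply Hmono; lra).
  assert (H (- m) <= H (- b0)) by (apply Hmono; lra).
  assert (H m <= H b) by (apply Hmono; lra).
  assert (H a <= H (- m)) by (apply Hmono; lra).
  assert (H b <= H m') by (apply Hmono; lra).
  assert (H (- m') <= H a) by (apply Hmono; lra).
  assert (H m' - H (- m') <= I) by (apply Hub; exists m'; split; [lra | auto]).
  unfold Rabs; destruct Rcase_abs; lra.
Qed.

Lemma in_Lp_of_decay F p alpha C N : 1 <= p -> 1 < alpha * p -> 0 < C -> 0 < N ->
  (forall x, continuity_pt F x) ->
  (forall x, N <= Rabs x -> Rabs (F x) <= C * Rpower (Rabs x) (- alpha)) -> in_Lp p F.
Proof.
  intros Hp Hq HC HN HFc HF.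
  set (h := fun x => abspow (F x) p).
  destruct (continuous_primitive h) as [H HD].
  { intros x. apply (continuity_pt_comp F (fun y => abspow y p)); auto.
    apply continuity_pt_abspow, Hp. }
  assert (Hh : forall x, 0 <= h x) by (intros; apply abspow_nonneg).
  assert (Hhd := abspow_decay F p alpha C N ltac:(lra) HC HF).
  set (D := Rpower C p). assert (0 < D) by apply Rpower_pos.
  set (A := D / (alpha * p - 1) * Rpower N (1 - alpha * p)).
  assert (0 <= A)
    by (left; apply Rmult_lt_0_compat; [apply Rdiv_lt_0_compat; lra | apply Rpower_pos]).
  assert (Hright : forall b, N <= b -> H b - H N <= A).
  { apply (primitive_tail_le H h); auto; try lra.
    intros t Ht. rewrite <- (Rabs_right t) at 2 by lra. apply Hhd. rewrite Rabs_right; lra. }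
  assert (Hleft : forall b, N <= b -> H (- N) - H (- b) <= A).
  { intros b Hb.
    assert (Hl := primitive_tail_le (fun y => - H (- y)) (fun y => h (- y)) D (alpha * p) N
                    ltac:(lra) Hq HN (fun x => derivable_pt_lim_reflect H h x (HD (- x)))).
    replace (H (- N) - H (- b)) with (- H (- b) - - H (- N)) by ring.
    apply Hl; auto.
    intros t Ht. replace t with (Rabs (- t)) at 2 by (rewrite Rabs_Ropp, Rabs_right; lra).
    apply Hhd. rewrite Rabs_Ropp, Rabs_right; lra. }
  assert (Hmono := nondecreasing_of_derivative_nonneg H h HD Hh).
  destruct (HK_int_R_of_primitive H h HD Hh) as [I HI].
  { exists ((H N + A) - (H (- N) - A)). intros b Hb.
    destruct (Rle_dec b N) as [HbN|HbN].
    - assert (H b <= H N) by (apply Hmono; lra).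
      assert (H (- N) <= H (- b)) by (apply Hmono; lra). lra.
    - pose proof (Hright b ltac:(lra)). pose proof (Hleft b ltac:(lra)). lra. }
  exists I. exact HI.
Qed.

Theorem mainTheorem11 (p : R) (f : R -> R)
  (hp : 1 <= p)
  (hloc : HK_loc f)
  (ha : HK_int_R f 0)
  (hb : exists alpha : R, 1 / p < alpha /\
          exists I : R, HK_int_R (fun t => abspow t alpha * f t) I) :
  exists F : R -> R,
    (forall x, HK_int_left f x (F x)) /\ in_Lp p F.
Proof.
  destruct hb as [alpha [Halpha [Ig Hg]]].
  assert (H1p : 0 < 1 / p) by (apply Rdiv_lt_0_compat; lra).
  assert (Hq : 1 < alpha * p).
  { replace 1 with (1 / p * p) by (field; lra). apply Rmult_lt_compat_r; lra. }
  exists (hk_primitive f). split.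
  - apply (hk_primitive_spec f 0 hloc ha).
  - destruct (hk_primitive_decay f alpha Ig hloc ltac:(lra) Hg ha) as [N [HN HF]].
    apply (in_Lp_of_decay _ p alpha 4 N); auto; try lra.
    intros x. apply (continuity_pt_hk_primitive f 0 hloc ha).
Qed.
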